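(* Let $\mathcal{B}(n)$ be the set of pairs $(s,t)\in S_n\times S_n$ whose commutator $[s,t]$ is a $3$-cycle, and $\mathcal{A}(n)\subseteq\mathcal{B}(n)$ the subset of those pairs with $\langle s,t\rangle\in\{A_n,S_n\}$. Then $\#\mathcal{A}(n)/\#\mathcal{B}(n)\to 0$ as $n\to\infty$.
   Context: $[s,t]=sts^{-1}t^{-1}$, with permutations composed as functions. *)

From HB Require Import structures.
From mathcomp Require Import all_boot all_order all_algebra all_fingroup all_solvable.
Set Implicit Arguments. Unset Strict Implicit. Unset Printing Implicit Defensive.

Local Open Scope group_scope.

(* Paper's commutator [s,t] = s t s^-1 t^-1, composed as functions
   (rightmost applied first).  In MathComp, (p * q) x = q (p x), so the
   function s o t o s^-1 o t^-1 is the MathComp product t^-1 * s^-1 * t * s. *)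
Definition paper_comm n (s t : 'S_n) : 'S_n := t^-1 * s^-1 * t * s.

Definition is_3cycle n (c : 'S_n) : bool :=
  [exists a : 'I_n, exists b : 'I_n, exists d : 'I_n,
    [&& a != b, b != d, a != d,
        (c a == b) && (c b == d) && (c d == a) &
        [forall x : 'I_n, [&& x != a, x != b & x != d] ==> (c x == x)]]].

Definition setB n : {set 'S_n * 'S_n} :=
  [set p | is_3cycle (paper_comm p.1 p.2) ].

Definition setA n : {set 'S_n * 'S_n} :=
  [set p in setB n | (<<[set p.1; p.2]>> == 'Alt_('I_n))
                     || (<<[set p.1; p.2]>> == 'Sym_('I_n))].

From HB Require Import structures.
From mathcomp Require Import all_boot all_order all_algebra all_fingroup all_solvable.
From mathcomp Require Import zify lra.
From Stdlib Require PeanoNat.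
Set Implicit Arguments. Unset Strict Implicit. Unset Printing Implicit Defensive.

(* Upper bound, #A(n) <= n^3 (n+1)^12 n!.  If <s, t> contains A_n and [s,t]
   is the 3-cycle (a b d), then s = s^t [s,t] agrees with s^t off {a, b, d};
   hence the points whose s-cycle length differs from the six lengths seen
   at a, b, d in s and s^t form a set stable under s, t and thus A_n, so it
   is empty: s has at most six cycle lengths.  Since permutations with the
   same number of cycles of each length are conjugate, s is determined up to
   conjugacy by a polynomial amount of data, and (s, t) is encoded by that
   data, the 3-cycle [s,t], and one permutation.

   Lower bound, #B(n) >= 2^k n! when 3 + 4 + ... + (k+3) <= n.  For each bit
   string b of length k, r_b is a 3-cycle on {0,1,2} together with cycles of
   lengths 4 + j for the bits j that are set; these are pairwise
   non-conjugate (the fixed-point counts of their powers recover b) and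
   [r_b, (0 2)] is a 3-cycle, which yields 2^k n! distinct pairs in B(n).

   With k about sqrt n, 2^k eventually dominates any polynomial in n. *)

Local Open Scope group_scope.

Section Commutators.
Variable n : nat.
Implicit Types (s t g z c : 'S_n).

Lemma paper_commJ s t g : paper_comm (s ^ g) (t ^ g) = (paper_comm s t) ^ g.
Proof. by rewrite /paper_comm -!conjVg -!conjMg. Qed.

Lemma is_3cycleP c : reflect (exists a b d : 'I_n, [/\ a != b, b != d, a != d,
   [/\ c a = b, c b = d & c d = a] &
   forall x, x != a -> x != b -> x != d -> c x = x]) (is_3cycle c).
Proof.
apply: (iffP existsP).
  move=> [a /existsP[b /existsP[d /and5P[ab bd ad /andP[/andP[/eqP h1 /eqP h2] /eqP h3] /forallP h]]]].
  exists a, b, d; split=> // x xa xb xd.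
  by apply/eqP; move: (h x); rewrite xa xb xd.
move=> [a [b [d [ab bd ad [h1 h2 h3] h]]]].
exists a; apply/existsP; exists b; apply/existsP; exists d.
rewrite ab bd ad h1 h2 h3 !eqxx /=; apply/forallP=> x; apply/implyP.
by case/and3P=> xa xb xd; rewrite h.
Qed.

Lemma is_3cycleJ c g : is_3cycle c -> is_3cycle (c ^ g).
Proof.
case/is_3cycleP=> a [b [d [ab bd ad [h1 h2 h3] h]]].
apply/is_3cycleP; exists (g a), (g b), (g d); rewrite !(inj_eq perm_inj) ab bd ad.
split=> //; first by rewrite !permJ h1 h2 h3.
move=> x xa xb xd; rewrite -[x](permKV g) permJ h //.
- by apply: contra xa => /eqP <-; rewrite permKV.
- by apply: contra xb => /eqP <-; rewrite permKV.
- by apply: contra xd => /eqP <-; rewrite permKV.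
Qed.

Lemma is_3cycle_tperm c : is_3cycle c ->
  exists a b d : 'I_n, c = tperm a b * tperm a d.
Proof.
case/is_3cycleP=> a [b [d [ab bd ad [h1 h2 h3] h]]]; exists a, b, d.
apply/permP=> x; rewrite permM.
case: (eqVneq x a) => [->|xa]; first by rewrite h1 tpermL tpermD // eq_sym.
case: (eqVneq x b) => [->|xb]; first by rewrite h2 tpermR tpermL.
case: (eqVneq x d) => [->|xd]; first by rewrite h3 (tpermD (x := a) (y := b)) ?tpermR // eq_sym.
by rewrite h // !tpermD // eq_sym.
Qed.

Lemma card_3cycles : #|[set c : 'S_n | is_3cycle c]| <= n ^ 3.
Proof.
pose f (p : 'I_n * 'I_n * 'I_n) : 'S_n := tperm p.1.1 p.1.2 * tperm p.1.1 p.2.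
have sub : [set c : 'S_n | is_3cycle c] \subset f @: [set: 'I_n * 'I_n * 'I_n].
  apply/subsetP=> c; rewrite inE => /is_3cycle_tperm[a [b [d ->]]].
  by apply/imsetP; exists (a, b, d).
apply: leq_trans (subset_leq_card sub) _; apply: leq_trans (leq_imset_card _ _) _.
by rewrite cardsT !card_prod card_ord !expnS expn0 muln1 mulnA.
Qed.

Lemma paper_comm_cent s t t' :
  paper_comm s t = paper_comm s t' -> s ^ (t * t'^-1) = s.
Proof.
rewrite /paper_comm => /(congr1 (fun u => u * s^-1)); rewrite -!mulgA mulgV !mulg1.
move=> E; have E2 : s^-1 ^ t = s^-1 ^ t' by rewrite /conjg E.
have E3 : s ^ t = s ^ t' by rewrite -[s]invgK conjVg E2 -conjVg.
by rewrite conjgM E3 -conjgM mulgV conjg1.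
Qed.

Lemma paper_comm_centM s z u : s ^ z = s -> paper_comm s (z * u) = paper_comm s u.
Proof.
move=> E; have E' : z^-1 * s^-1 * z = s^-1 by rewrite -mulgA -conjgE conjVg E.
by rewrite /paper_comm invMg !mulgA -(mulgA _ z^-1) -(mulgA _ _ z) E'.
Qed.

Lemma paper_comm_fixpoint s t y : t y = y -> t (s^-1 y) = s^-1 y ->
  paper_comm s t y = y.
Proof.
move=> ty tsy; have tVy : t^-1 y = y by rewrite -{1}ty permK.
by rewrite /paper_comm !permM tVy tsy permKV.
Qed.

End Commutators.

Section CycleType.
Variable n : nat.
Implicit Types (s t g : 'S_n) (x y r : 'I_n).

Definition cycle_len s x := #|porbit s x|.

Definition cycle_min s x : 'I_n := [arg min_(y < x in porbit s x) (y : nat)].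

Lemma cycle_minP s x :
  cycle_min s x \in porbit s x /\ forall y, y \in porbit s x -> cycle_min s x <= y.
Proof. by rewrite /cycle_min; case: arg_minnP => [|i Hi Hmin]; first exact: porbit_id. Qed.

Lemma porbit_eq s x y : y \in porbit s x -> porbit s y = porbit s x.
Proof. by move=> H; apply/eqP; rewrite eq_porbit_mem. Qed.

Lemma porbit_succ s x : s x \in porbit s x.
Proof. by rewrite -[s x]/(iter 1 s x) -permX mem_porbit. Qed.

Lemma cycle_min_eq s x y : y \in porbit s x -> cycle_min s y = cycle_min s x.
Proof.
move=> H; have [Py My] := cycle_minP s y; have [Px Mx] := cycle_minP s x.
rewrite (porbit_eq H) in Py My.
by apply/val_inj/eqP; rewrite eqn_leq My // Mx.
Qed.

Lemma cycle_min_mem s x : cycle_min s x \in porbit s x.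
Proof. by case: (cycle_minP s x). Qed.

Lemma cycle_min_id s x : cycle_min s (cycle_min s x) = cycle_min s x.
Proof. exact: cycle_min_eq (cycle_min_mem s x). Qed.

Lemma cycle_len_eq s x y : y \in porbit s x -> cycle_len s y = cycle_len s x.
Proof. by move=> H; rewrite /cycle_len (porbit_eq H). Qed.

Lemma cycle_len_min s x : cycle_len s (cycle_min s x) = cycle_len s x.
Proof. exact: cycle_len_eq (cycle_min_mem s x). Qed.

Lemma cycle_len_gt0 s x : 0 < cycle_len s x.
Proof. by rewrite lt0n card_porbit_neq0. Qed.

Lemma cycle_len_le s x : cycle_len s x <= n.
Proof. by apply: leq_trans (max_card _) _; rewrite card_ord. Qed.

Lemma porbit_iter s r k : iter k s r \in porbit s r.
Proof. by rewrite -permX mem_porbit. Qed.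

Definition cycle_pos s x := index x (traject s (cycle_min s x) (cycle_len s x)).

Lemma mem_traject_min s x : x \in traject s (cycle_min s x) (cycle_len s x).
Proof.
rewrite -cycle_len_min /cycle_len -porbit_traject (porbit_eq (cycle_min_mem s x)).
exact: porbit_id.
Qed.

Lemma cycle_pos_lt s x : cycle_pos s x < cycle_len s x.
Proof.
by rewrite /cycle_pos -{2}(size_traject s (cycle_min s x) (cycle_len s x))
  index_mem mem_traject_min.
Qed.

Lemma iter_cycle_pos s x : iter (cycle_pos s x) s (cycle_min s x) = x.
Proof.
by rewrite /cycle_pos -(nth_traject s (cycle_pos_lt s x)) nth_index ?mem_traject_min.
Qed.

Lemma index_iter s r k : k < cycle_len s r ->
  index (iter k s r) (traject s r (cycle_len s r)) = k.
Proof.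
move=> Hk; rewrite -(nth_traject s Hk) index_uniq ?size_traject //.
exact: uniq_traject_porbit.
Qed.

Definition cycle_rank s x := #|[set r | (cycle_min s r == r) &&
  (cycle_len s r == cycle_len s x) && (r < cycle_min s x)]|.

Definition cycle_count s L := #|[set r | (cycle_min s r == r) && (cycle_len s r == L)]|.

(* A point is encoded by (length of its cycle, rank of its cycle, position
   in its cycle); s acts on codes by rotation inside each cycle. *)
Definition cycle_code s x := (cycle_len s x, cycle_rank s x, cycle_pos s x).

Definition code_succ (p : nat * nat * nat) :=
  let: (L, j, k) := p in (L, j, k.+1 %% L).

Lemma cycle_code_succ s x : cycle_code s (s x) = code_succ (cycle_code s x).
Proof.
have Hm := porbit_succ s x.
rewrite /cycle_code /code_succ /cycle_rank (cycle_len_eq Hm) (cycle_min_eq Hm).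
congr (_, _, _).
set b := cycle_min s x; set L := cycle_len s x.
have Hk := cycle_pos_lt s x; have Hi := iter_cycle_pos s x.
rewrite /cycle_pos (cycle_len_eq Hm) (cycle_min_eq Hm) -/b -/L.
have HL : cycle_len s b = L by rewrite /b cycle_len_min.
case: (ltngtP (cycle_pos s x).+1 L) => H.
- by rewrite -[in LHS]Hi -iterS -HL index_iter ?modn_small // HL.
- by move: H; rewrite ltnS leqNgt Hk.
- rewrite H modnn.
  have -> : s x = b by rewrite -{1}Hi -iterS H -HL /cycle_len iter_porbit.
  by rewrite -[b in index b _]/(iter 0 s b) -HL index_iter // HL /L cycle_len_gt0.
Qed.

Lemma cycle_rank_inj s x y : cycle_min s x = x -> cycle_min s y = y ->
  cycle_len s x = cycle_len s y -> cycle_rank s x = cycle_rank s y -> x = y.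
Proof.
move=> bx by_ Lxy; rewrite /cycle_rank bx by_.
wlog lt : x y bx by_ Lxy / x < y.
  move=> Hw E; case: (ltngtP x y) => H.
  - exact: Hw.
  - by apply/esym/Hw => //; apply/esym.
  - exact: val_inj.
move=> E; exfalso; move: E; apply/eqP; rewrite neq_ltn; apply/orP; left.
apply: proper_card; apply/properP; split.
  apply/subsetP=> r; rewrite !inE -Lxy => /andP[/andP[-> ->] H] /=.
  exact: ltn_trans H lt.
by exists x; rewrite !inE ?bx ?Lxy ?eqxx ?lt //= ltnn.
Qed.

Lemma cycle_code_inj s : injective (cycle_code s).
Proof.
move=> x y [E1 E2 E3].
have Eb : cycle_min s x = cycle_min s y.
  apply: (cycle_rank_inj (cycle_min_id s x) (cycle_min_id s y)).
    by rewrite !cycle_len_min.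
  by move: E2; rewrite /cycle_rank !cycle_min_id !cycle_len_min E1.
by rewrite -(iter_cycle_pos s x) -(iter_cycle_pos s y) E3 Eb.
Qed.

Lemma cycle_rank_lt s x : cycle_rank s x < cycle_count s (cycle_len s x).
Proof.
apply: proper_card; apply/properP; split.
  by apply/subsetP=> r; rewrite !inE => /andP[/andP[-> ->]].
by exists (cycle_min s x); rewrite !inE ?cycle_min_id ?cycle_len_min ?eqxx //= ltnn.
Qed.

Lemma cycle_count_le s L : cycle_count s L <= n.
Proof. by apply: leq_trans (max_card _) _; rewrite card_ord. Qed.

(* Every rank below the number of cycles of length L is attained: ranks
   inject the base points of these cycles into [0, cycle_count s L). *)
Lemma cycle_rank_surj s L j : j < cycle_count s L ->
  exists r, [/\ cycle_min s r = r, cycle_len s r = L & cycle_rank s r = j].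
Proof.
set R := [set r | (cycle_min s r == r) && (cycle_len s r == L)] => Hj.
set ranks := map (cycle_rank s) (enum R).
have Uranks : uniq ranks.
  rewrite map_inj_in_uniq ?enum_uniq // => x y; rewrite !mem_enum !inE.
  move=> /andP[/eqP bx /eqP Lx] /andP[/eqP by_ /eqP Ly].
  by apply: cycle_rank_inj; rewrite ?Lx.
have Sranks : {subset ranks <= iota 0 #|R|}.
  move=> i /mapP[r]; rewrite mem_enum inE => /andP[_ /eqP Lr] ->.
  by rewrite mem_iota add0n /R -Lr cycle_rank_lt.
have Hsize : size (iota 0 #|R|) <= size ranks by rewrite size_iota size_map -cardE.
have [_ Eranks] := uniq_min_size Uranks Sranks Hsize.
have : j \in ranks by rewrite Eranks mem_iota.
case/mapP=> r; rewrite mem_enum inE => /andP[/eqP br /eqP Lr] ->.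
by exists r.
Qed.

Lemma cycle_code_surj s s' x : (forall L, cycle_count s L = cycle_count s' L) ->
  exists y, cycle_code s' y = cycle_code s x.
Proof.
move=> HN.
have Hj : cycle_rank s x < cycle_count s' (cycle_len s x) by rewrite -HN cycle_rank_lt.
have [r [br Lr Rr]] := cycle_rank_surj Hj.
have Hk := cycle_pos_lt s x.
exists (iter (cycle_pos s x) s' r).
have Hm := porbit_iter s' r (cycle_pos s x).
rewrite /cycle_code (cycle_len_eq Hm) Lr; congr (_, _, _).
  by rewrite -Rr /cycle_rank (cycle_len_eq Hm) (cycle_min_eq Hm) br.
by rewrite /cycle_pos (cycle_len_eq Hm) (cycle_min_eq Hm) br index_iter // Lr.
Qed.

(* Permutations of the same cycle type are conjugate: the conjugating
   permutation matches points with equal codes. *)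
Lemma conj_of_cycle_count s s' : (forall L, cycle_count s L = cycle_count s' L) ->
  exists g, s' = s ^ g.
Proof.
move=> HN.
pose gf x := odflt x [pick y | cycle_code s' y == cycle_code s x].
have gP x : cycle_code s' (gf x) = cycle_code s x.
  rewrite /gf; case: pickP => [y /eqP //|H].
  by have [y Hy] := cycle_code_surj x HN; move: (H y); rewrite Hy eqxx.
have ginj : injective gf.
  by move=> x y E; apply: (@cycle_code_inj s); rewrite -!gP E.
exists (perm ginj); apply/permP=> y.
rewrite -[y](permKV (perm ginj)); set x := ((perm ginj)^-1)%g y.
rewrite permJ !permE; apply: (@cycle_code_inj s').
by rewrite cycle_code_succ !gP cycle_code_succ.
Qed.

End CycleType.

Section FewCycleLengths.
Variable n : nat.
Implicit Types (s t g u v : 'S_n) (x y : 'I_n).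

Lemma porbit_agree u v x : (forall y, y \in porbit u x -> u y = v y) ->
  porbit u x = porbit v x.
Proof.
move=> H; have E i : (u ^+ i) x = (v ^+ i) x.
  elim: i => [|i IH]; first by rewrite !expg0.
  by rewrite !permX !iterS -!permX H ?mem_porbit // IH.
by apply/setP=> y; apply/porbitP/porbitP => -[i ->]; exists i; rewrite E.
Qed.

Lemma porbitJ u g x : porbit (u ^ g) (g x) = g @: porbit u x.
Proof.
apply/setP=> y; apply/porbitP/imsetP.
  by move=> [i ->]; exists ((u ^+ i) x); rewrite ?mem_porbit // -conjXg permJ.
by move=> [z /porbitP[i ->] ->]; exists i; rewrite -conjXg permJ.
Qed.

Lemma cycle_lenJ u g x : cycle_len (u ^ g) (g x) = cycle_len u x.
Proof. by rewrite /cycle_len porbitJ card_imset //; exact: perm_inj. Qed.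

Lemma gen_stable (X : {set 'I_n}) (S : {set 'S_n}) :
  (forall u x, u \in S -> x \in X -> u x \in X) ->
  forall g x, g \in <<S>> -> x \in X -> g x \in X.
Proof.
have NX g : g \in 'N(X | 'P) <-> forall x, x \in X -> g x \in X.
  split; first by move=> H x Hx; rewrite -(astabs_act x H) in Hx.
  move=> H; rewrite inE; apply/andP; split; first by rewrite inE.
  by rewrite inE; apply/subsetP=> x Hx; rewrite inE /=; exact: H.
move=> HS g x Hg; apply: (proj1 (NX g)); apply: subsetP Hg.
by rewrite gen_subG; apply/subsetP=> u Hu; apply/NX => y; apply: HS.
Qed.

Lemma Alt_transitive x y e : e != x -> e != y ->
  exists2 g, g \in 'Alt_('I_n) & g x = y.
Proof.
move=> ex ey; case: (eqVneq x y) => [<-|xy]; first by exists 1; rewrite ?group1 ?perm1.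
exists (tperm x y * tperm x e); first by rewrite Alt_even odd_permM !odd_tperm xy eq_sym ex.
by rewrite permM tpermL tpermD // eq_sym.
Qed.

Definition cycle_lengths s : {set 'I_n.+1} :=
  [set i : 'I_n.+1 | [exists x, cycle_len s x == i]].

(* If s and t generate A_n or S_n and [s,t] = c is the 3-cycle (a b d), then
   every cycle of s has the length of the cycle of s or of s^t through a, b
   or d.  Indeed s = s^t c, so s and s^t agree off {a, b, d}; the points whose
   s-cycle has another length form a set stable under s and t, hence under
   A_n, which it cannot be since it misses a. *)
Lemma setA_cycle_lengths s t : (s, t) \in setA n ->
  exists2 Lam : seq nat, size Lam = 6 & forall x, cycle_len s x \in Lam.
Proof.
rewrite inE => /andP[]; rewrite inE /= => /is_3cycleP[a [b [d [ab bd ad [h1 h2 h3] hc]]]] Hg.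
set c := paper_comm s t in h1 h2 h3 hc.
set s' := s ^ t.
have Es z : s z = c (s' z).
  suff -> : s = s' * c by rewrite permM.
  by rewrite /s' /c /paper_comm /conjg !mulgA !mulgK mulVg mul1g.
set Lam := [:: cycle_len s a; cycle_len s b; cycle_len s d;
               cycle_len s' a; cycle_len s' b; cycle_len s' d].
exists Lam => //.
set X := [set x | cycle_len s x \notin Lam].
have sX x : x \in X -> s x \in X by rewrite !inE (cycle_len_eq (porbit_succ s x)).
have tX x : x \in X -> t x \in X.
  rewrite !inE => Hx.
  have L1 : cycle_len s' (t x) = cycle_len s x by rewrite /s' cycle_lenJ.
  have off_abd z : z \in porbit s' (t x) -> [&& z != a, z != b & z != d].
    move=> Hz; have E := cycle_len_eq Hz.
    by apply/and3P; split; apply/negP => /eqP Ez; subst z; move: Hx;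
      rewrite -L1 -E eqxx ?orbT.
  have agree y : y \in porbit s' (t x) -> s' y = s y.
    move=> Hy; rewrite Es.
    have : s' y \in porbit s' (t x) by rewrite -(porbit_eq Hy) porbit_succ.
    by case/off_abd/and3P => na nb nd; rewrite hc.
  by rewrite /cycle_len -(porbit_agree agree) -/(cycle_len _ _) L1.
have stX : forall g y, g \in <<[set s; t]>> -> y \in X -> g y \in X.
  by apply: gen_stable => u y /set2P[] ->; [apply: sX | apply: tX].
move=> x; apply/negPn/negP => Hx; have Xx : x \in X by rewrite inE.
have xa : x != a by apply: contra Hx => /eqP ->; rewrite !inE eqxx.
have [e ex ea] : exists2 e, e != x & e != a.
  case: (eqVneq x b) => [xb|xb]; last by exists b; rewrite 1?eq_sym.
  by exists d; rewrite 1?eq_sym // xb.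
have [g gA gx] := Alt_transitive ex ea.
have gG : g \in <<[set s; t]>>.
  by case/orP: Hg => /eqP ->; rewrite // inE.
by have := stX g x gG Xx; rewrite gx !inE eqxx.
Qed.

End FewCycleLengths.

Section UpperBound.
Variable n : nat.
Implicit Types (s t g : 'S_n) (x y : 'I_n).

Definition few s := #|cycle_lengths s| <= 6.

Lemma setA_few s t : (s, t) \in setA n -> few s.
Proof.
case/setA_cycle_lengths=> Lam sz HL; rewrite /few -sz cardE -(size_map (@nat_of_ord _)).
apply: uniq_leq_size; first by rewrite map_inj_uniq ?enum_uniq //; exact: val_inj.
by move=> L /mapP[i]; rewrite mem_enum inE => /existsP[x /eqP Ex] ->; rewrite -Ex.
Qed.

Definition profileT := {ffun 'I_6 -> 'I_n.+1 * 'I_n.+1}.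

(* The cycle profile of s: its first six cycle lengths, each paired with the
   number of cycles of that length.  For s with few cycle lengths it
   determines the conjugacy class of s. *)
Definition profile s : profileT :=
  [ffun i : 'I_6 => let L := nth ord0 (enum (cycle_lengths s)) i in
                    (L, inord (cycle_count s L))].

Lemma cycle_count0 s L : ~~ [exists x, cycle_len s x == L] -> cycle_count s L = 0.
Proof.
move=> H; apply: eq_card0 => r; rewrite !inE.
by apply/negP => /andP[_ /eqP E]; move/negP: H; apply; apply/existsP; exists r; rewrite E.
Qed.

Lemma profile_cycle_count_occ s s' L : few s -> profile s = profile s' ->
  [exists x, cycle_len s x == L] -> cycle_count s L = cycle_count s' L.
Proof.
move=> fs E /existsP[x /eqP Ex].
have HL : L < n.+1 by rewrite ltnS -Ex cycle_len_le.
set i0 : 'I_n.+1 := inord L.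
have vi0 : nat_of_ord i0 = L by rewrite /i0 inordK.
have mi0 : i0 \in enum (cycle_lengths s).
  by rewrite mem_enum inE; apply/existsP; exists x; rewrite vi0 Ex.
have Hk : index i0 (enum (cycle_lengths s)) < 6.
  by apply: leq_trans (fs); rewrite cardE index_mem.
have := congr1 (fun f : profileT => f (Ordinal Hk)) E.
rewrite !ffunE /= nth_index // => -[E1 E2].
move/(congr1 (@nat_of_ord _)): E2.
by rewrite -E1 !inordK ?ltnS ?cycle_count_le // vi0.
Qed.

Lemma profile_cycle_count s s' : few s -> few s' -> profile s = profile s' ->
  forall L, cycle_count s L = cycle_count s' L.
Proof.
move=> fs fs' E L.
case: (boolP [exists x, cycle_len s x == L]) => H1.
  exact: profile_cycle_count_occ H1.
case: (boolP [exists x, cycle_len s' x == L]) => H2.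
  exact/esym/(profile_cycle_count_occ fs' (esym E) H2).
by rewrite !cycle_count0.
Qed.

Definition profile_rep (tau : profileT) : 'S_n :=
  odflt 1 [pick s0 | few s0 && (profile s0 == tau)].

Definition to_rep s : 'S_n := odflt 1 [pick g | s == profile_rep (profile s) ^ g].

Definition comm_witness s c : 'S_n := odflt 1 [pick t | paper_comm s t == c].

Lemma profile_repP s : few s ->
  few (profile_rep (profile s)) /\ profile (profile_rep (profile s)) = profile s.
Proof.
move=> fs; rewrite /profile_rep; case: pickP => [s0 /andP[f0 /eqP ->] //|H].
by move: (H s); rewrite fs eqxx.
Qed.

Lemma to_repP s : few s -> s = profile_rep (profile s) ^ to_rep s.
Proof.
move=> fs; have [f0 e0] := profile_repP fs.
have [g Hg] := conj_of_cycle_count (profile_cycle_count f0 fs e0).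
rewrite /to_rep; case: pickP => [g' /eqP //|H].
by move: (H g); rewrite -Hg eqxx.
Qed.

Lemma comm_witnessP s t : paper_comm s (comm_witness s (paper_comm s t)) = paper_comm s t.
Proof.
rewrite /comm_witness; case: pickP => [t' /eqP //|H].
by move: (H t); rewrite eqxx.
Qed.

(* The encoding of a pair (s, t): its commutator c, the profile of s, and a
   permutation g from which s and t are recovered: s is the representative
   of its profile conjugated by g, and t is determined up to the centralizer
   of s by c. *)
Definition encode (p : 'S_n * 'S_n) : 'S_n * profileT * 'S_n :=
  let: (s, t) := p in let c := paper_comm s t in
  (c, profile s, to_rep s * (t * (comm_witness s c)^-1)).

Lemma encode_decode s t : few s -> profile_rep (profile s) ^ (encode (s, t)).2 = s.
Proof.
move=> fs; rewrite /encode /= conjgM -to_repP //.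
by apply: paper_comm_cent; rewrite comm_witnessP.
Qed.

(* On A(n) the encoding is injective: s is decoded, and t is determined by
   [s, t] and the last component. *)
Lemma encode_inj : {in setA n &, injective encode}.
Proof.
move=> [s t] [s' t'] H H' E.
have Es : s = s'.
  have Ep : profile s = profile s' by case: E.
  by rewrite -(encode_decode t (setA_few H)) -(encode_decode t' (setA_few H')) E Ep.
subst s'; move: E => /= -[Ec Ew].
by rewrite Ec in Ew; move/mulgI/mulIg: Ew => ->.
Qed.

Lemma card_setA_le : #|setA n| <= n ^ 3 * (n.+1 * n.+1) ^ 6 * n`!.
Proof.
rewrite -(card_in_imset encode_inj).
have sub : encode @: setA n \subset
    setX (setX [set c : 'S_n | is_3cycle c] [set: profileT]) [set: 'S_n].
  apply/subsetP=> _ /imsetP[[s t] H ->]; rewrite !inE /= !andbT.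
  by move: H; rewrite !inE => /andP[].
apply: leq_trans (subset_leq_card sub) _.
rewrite !cardsX !cardsT card_ffun !card_prod !card_ord card_Sn.
by rewrite leq_mul2r leq_mul2r card_3cycles !orbT.
Qed.

End UpperBound.

Fixpoint block_perm (ls : seq (nat * bool)) (x : nat) : nat :=
  match ls with
  | [::] => x
  | (L, rot) :: ls' =>
      if x < L then (if rot then x.+1 %% L else x) else L + block_perm ls' (x - L)
  end.

Definition blocks_size (ls : seq (nat * bool)) := sumn (map fst ls).

Lemma block_perm_ge ls x : blocks_size ls <= x -> block_perm ls x = x.
Proof.
elim: ls x => [//|[L rot] ls IH] x /=; rewrite /blocks_size /= => H.
have LX : L <= x := leq_trans (leq_addr _ _) H.
by rewrite ltnNge LX /= IH ?subnKC // leq_subRL.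
Qed.

Lemma block_perm_lt ls x : x < blocks_size ls -> block_perm ls x < blocks_size ls.
Proof.
elim: ls x => [//|[L rot] ls IH] x /=; rewrite /blocks_size /= => H.
case: (ltnP x L) => HL.
  case: rot; last by rewrite ltn_addr.
  by rewrite ltn_addr // ltn_mod; case: (L) HL.
by rewrite ltn_add2l IH // -(ltn_add2l L) subnKC.
Qed.

Lemma block_perm_inj ls : injective (block_perm ls).
Proof.
elim: ls => [//|[L rot] ls IH] x y /=.
have rot_lt z : z < L -> (if rot then z.+1 %% L else z) < L.
  by move=> Hz; case: rot => //; rewrite ltn_mod; case: (L) Hz.
case: (ltnP x L) => Hx; case: (ltnP y L) => Hy.
- case: rot {rot_lt} => // E.
  have : x.+1 == y.+1 %[mod L] by rewrite E.
  by rewrite -[x.+1]addn1 -[y.+1]addn1 eqn_modDr !modn_small // => /eqP.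
- by move=> E; have := rot_lt x Hx; rewrite E ltnNge leq_addr.
- by move=> E; have := rot_lt y Hy; rewrite -E ltnNge leq_addr.
- by move/addnI/IH => E; rewrite -(subnKC Hx) -(subnKC Hy) E.
Qed.

Lemma iter_block_perm L rot ls k x :
  iter k (block_perm ((L, rot) :: ls)) x =
  if x < L then (if rot then (x + k) %% L else x) else L + iter k (block_perm ls) (x - L).
Proof.
case: (ltnP x L) => H; case: rot; elim: k => [|k IH]; rewrite ?iterS ?IH /=.
- by rewrite addn0 modn_small.
- by rewrite ltn_mod (leq_ltn_trans (leq0n x) H) -addn1 modnDml -addnA addn1.
- by [].
- by rewrite H.
- by rewrite subnKC.
- by rewrite ltnNge leq_addr /= addKn.
- by rewrite subnKC.
- by rewrite ltnNge leq_addr /= addKn.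
Qed.

Definition block_fixcount ls m :=
  count (fun x => iter m (block_perm ls) x == x) (iota 0 (blocks_size ls)).

(* Contribution of one block: a rotated block of length L is pointwise fixed
   by the m-th power iff L divides m. *)
Definition block_fix m (p : nat * bool) := if p.2 && ~~ (p.1 %| m) then 0 else p.1.

Lemma block_fixcountE ls m : block_fixcount ls m = sumn (map (block_fix m) ls).
Proof.
elim: ls => [//|[L rot] ls IH].
rewrite /block_fixcount /blocks_size /= iotaD count_cat -/(blocks_size ls) add0n.
rewrite -[in iota L _](addn0 L) iotaDl count_map /=; congr (_ + _); last first.
  rewrite -IH /block_fixcount; apply: eq_count => x /=.
  by rewrite iter_block_perm ltnNge leq_addr /= addKn eqn_add2l.
have -> : count (fun x => iter m (block_perm ((L, rot) :: ls)) x == x) (iota 0 L) =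
          count (fun=> ~~ rot || (L %| m)) (iota 0 L).
  apply: eq_in_count => x; rewrite mem_iota add0n => /andP[_ Hx].
  rewrite iter_block_perm Hx; case: rot => /=; last by rewrite eqxx.
  by rewrite -{2}(modn_small Hx) -{2}[x]addn0 eqn_modDl mod0n.
rewrite /block_fix /=; case: rot => /=; last by rewrite count_predT size_iota.
by case: (L %| m); rewrite /= ?count_predT ?size_iota ?count_pred0.
Qed.

Lemma card_set_count (T : finType) (P : pred T) : #|[set x | P x]| = count P (enum T).
Proof.
rewrite cardsE cardE /enum_mem size_filter -enumT.
by rewrite (@eq_filter _ _ predT) ?filter_predT.
Qed.

Definition fixcount (T : finType) (g : {perm T}) m := #|[set x | (g ^+ m) x == x]|.

Lemma fixcountJ (T : finType) (g h : {perm T}) m : fixcount (g ^ h) m = fixcount g m.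
Proof.
rewrite /fixcount -conjXg.
have -> : [set x | ((g ^+ m) ^ h) x == x] = h @: [set x | (g ^+ m) x == x].
  apply/setP=> y; rewrite -[y](permKV h) (mem_imset _ _ (@perm_inj _ h)) !inE.
  by rewrite permJ (inj_eq perm_inj).
by rewrite card_imset //; exact: perm_inj.
Qed.

Section Family.
Variable k : nat.
Implicit Types b : k.-tuple bool.

Definition family_blocks b : seq (nat * bool) :=
  (3, true) :: [seq (4 + j, nth false b j) | j <- iota 0 k].

Definition family_size := 3 + sumn [seq 4 + j | j <- iota 0 k].

Lemma blocks_size_family b : blocks_size (family_blocks b) = family_size.
Proof. by rewrite /blocks_size /= -map_comp. Qed.

Definition rotated_fix b m j := if nth false b j && ((4 + j) %| m) then 4 + j else 0.

Lemma block_fixcount_family b m : block_fixcount (family_blocks b) m =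
  block_fix m (3, true) + (\sum_(0 <= j < k) block_fix 1 (4 + j, nth false b j)
                           + \sum_(0 <= j < k) rotated_fix b m j).
Proof.
rewrite block_fixcountE /family_blocks /= -big_split /=; congr (_ + _).
rewrite -map_comp sumnE big_map /index_iota subn0 /=; apply: eq_bigr => j _.
rewrite /block_fix /rotated_fix /=; case: (nth false b j) => /=; last by rewrite addn0.
by case: (_ %| m).
Qed.

(* Equal fixed-point counts force equal rotated-block contributions, since
   the remaining terms are read off at m = 1. *)
Lemma rotated_fix_eq b b' :
  (forall m, block_fixcount (family_blocks b) m = block_fixcount (family_blocks b') m) ->
  forall m, \sum_(0 <= j < k) rotated_fix b m j = \sum_(0 <= j < k) rotated_fix b' m j.
Proof.
move=> H m.
have no_rot b0 : \sum_(0 <= j < k) rotated_fix b0 1%N j = 0.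
  by rewrite big1 // => j _; rewrite /rotated_fix dvdn1; case: (nth false b0 j).
have := H 1%N; have := H m; rewrite !block_fixcount_family !no_rot !addn0.
by move/addnI=> Hm /addnI H1; move: Hm; rewrite H1 => /addnI.
Qed.

(* Only blocks of length at most 4 + j contribute at m = 4 + j. *)
Lemma rotated_fix_split b j : j < k ->
  \sum_(0 <= i < k) rotated_fix b (4 + j) i =
  \sum_(0 <= i < j) rotated_fix b (4 + j) i + rotated_fix b (4 + j) j.
Proof.
move=> jk; have Z : \sum_(j.+1 <= i < k) rotated_fix b (4 + j) i = 0.
  rewrite big_nat_cond big1 // => i /andP[/andP[Hi _] _].
  rewrite /rotated_fix; case: (nth false b i) => //=.
  case: ifP => // /dvdn_leq; rewrite addn_gt0 /= => /(_ isT).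
  by rewrite leq_add2l leqNgt Hi.
by rewrite (@big_cat_nat _ _ _ j.+1) // big_nat_recr // Z; apply: addn0.
Qed.

(* The fixed-point counts of all powers determine the bit string: by strong
   induction on j, the count at m = 4 + j reveals the j-th bit. *)
Lemma family_fixcount_inj b b' :
  (forall m, block_fixcount (family_blocks b) m = block_fixcount (family_blocks b') m) ->
  b = b'.
Proof.
move=> H; have D := rotated_fix_eq H.
have bits j : j < k -> nth false b j = nth false b' j.
  elim/ltn_ind: j => j IH jk.
  have := D (4 + j); rewrite !rotated_fix_split //.
  have -> : \sum_(0 <= i < j) rotated_fix b (4 + j) i =
            \sum_(0 <= i < j) rotated_fix b' (4 + j) i.
    by apply: eq_big_nat => i /andP[_ Hi]; rewrite /rotated_fix IH // (ltn_trans Hi).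
  move/addnI; rewrite /rotated_fix dvdnn !andbT.
  by case: (nth false b j); case: (nth false b' j).
apply: val_inj; apply: (@eq_from_nth _ false); first by rewrite !size_tuple.
by move=> i; rewrite size_tuple => /bits.
Qed.

Variable n : nat.
Hypothesis fits : family_size <= n.

Lemma family_perm_lt b (x : 'I_n) : block_perm (family_blocks b) x < n.
Proof.
case: (ltnP x family_size) => H.
  by apply: leq_trans fits; rewrite -(blocks_size_family b) block_perm_lt // blocks_size_family.
by rewrite block_perm_ge ?blocks_size_family.
Qed.

Definition family_fun b (x : 'I_n) : 'I_n := Ordinal (family_perm_lt b x).

Lemma family_fun_inj b : injective (family_fun b).
Proof. by move=> x y /(congr1 val) /block_perm_inj /val_inj. Qed.

Definition family_perm b : 'S_n := perm (@family_fun_inj b).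

Lemma family_permE b x : val (family_perm b x) = block_perm (family_blocks b) x.
Proof. by rewrite permE. Qed.

Lemma family_permX b m (x : 'I_n) :
  val ((family_perm b ^+ m) x) = iter m (block_perm (family_blocks b)) x.
Proof. by rewrite permX; elim: m => [//|m IH]; rewrite !iterS family_permE IH. Qed.

Lemma fixcount_family b m :
  fixcount (family_perm b) m = block_fixcount (family_blocks b) m + (n - family_size).
Proof.
rewrite /fixcount card_set_count.
have -> : count (fun x : 'I_n => (family_perm b ^+ m) x == x) (enum 'I_n) =
          count (fun x => iter m (block_perm (family_blocks b)) x == x) (map val (enum 'I_n)).
  by rewrite count_map; apply: eq_count => x /=; rewrite -family_permX -val_eqE.
rewrite val_enum_ord -(subnKC fits) iotaD count_cat add0n /block_fixcount.
rewrite blocks_size_family subnKC //; congr (_ + _).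
rewrite (@eq_in_count _ _ predT) ?count_predT ?size_iota //.
move=> x; rewrite mem_iota => /andP[Hx _].
have E j : iter j (block_perm (family_blocks b)) x = x.
  by elim: j => [//|j IH]; rewrite iterS IH block_perm_ge // blocks_size_family.
by rewrite /= E eqxx.
Qed.

Lemma family_perm_conj b b' w : family_perm b' = family_perm b ^ w -> b = b'.
Proof.
move=> E; apply: family_fixcount_inj => m; apply: (@addIn (n - family_size)).
by rewrite -!fixcount_family E fixcountJ.
Qed.

End Family.

Section LowerBound.
Variables k n : nat.
Hypothesis fits : family_size k <= n.
Implicit Types b : k.-tuple bool.

Lemma three_le_n : 3 <= n.
Proof. by apply: leq_trans fits; rewrite leq_addr. Qed.

Definition p0 : 'I_n := widen_ord three_le_n (@Ordinal 3 0 isT).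
Definition p1 : 'I_n := widen_ord three_le_n (@Ordinal 3 1 isT).
Definition p2 : 'I_n := widen_ord three_le_n (@Ordinal 3 2 isT).

Lemma family_perm_small b (x : 'I_n) : x < 3 -> val (family_perm fits b x) = x.+1 %% 3.
Proof. by move=> H; rewrite family_permE /family_blocks /= H. Qed.

Lemma family_permV_large b (x : 'I_n) : 3 <= x -> 3 <= (family_perm fits b)^-1 x.
Proof.
move=> H; rewrite leqNgt; apply/negP => Hlt.
have := family_perm_small b Hlt; rewrite permKV => E.
by move: H; rewrite E ltnNge -ltnS ltn_mod.
Qed.

Definition swap02 : 'S_n := tperm p0 p2.

Lemma swap02_large (x : 'I_n) : 3 <= x -> swap02 x = x.
Proof.
move=> H; rewrite /swap02 tpermD //; apply/negP => /eqP E; move: H; rewrite -E //.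
Qed.

Lemma family_comm_3cycle b : is_3cycle (paper_comm (family_perm fits b) swap02).
Proof.
set r := family_perm fits b.
have e0 : r p0 = p1 by apply: val_inj; rewrite family_perm_small.
have e1 : r p1 = p2 by apply: val_inj; rewrite family_perm_small.
have e2 : r p2 = p0 by apply: val_inj; rewrite family_perm_small.
have ne (x y : 'I_n) : val x != val y -> x != y by apply: contra => /eqP ->.
have n01 : p0 != p1 by apply: ne.
have n02 : p0 != p2 by apply: ne.
have n21 : p2 != p1 by apply: ne.
have i0 : r^-1 p0 = p2 by rewrite -e2 permK.
have i1 : r^-1 p1 = p0 by rewrite -e0 permK.
have i2 : r^-1 p2 = p1 by rewrite -e1 permK.
apply/is_3cycleP; exists p0, p2, p1; split=> //.
  rewrite /paper_comm /swap02 !permM tpermV; split.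
  - by rewrite tpermL i2 (tpermD n01 n21) e1.
  - by rewrite tpermR i0 tpermR e0.
  - by rewrite (tpermD n01 n21) i1 tpermL e2.
move=> x x0 x2 x1.
have big : 3 <= x.
  rewrite leqNgt; apply/negP => H.
  have : (x == p0) || (x == p1) || (x == p2).
    by rewrite -!val_eqE /=; case: (nat_of_ord x) H => [|[|[|]]].
  by rewrite (negbTE x0) (negbTE x1) (negbTE x2).
by apply: paper_comm_fixpoint; apply: swap02_large; rewrite ?family_permV_large.
Qed.

Definition conj_from b (s : 'S_n) : 'S_n := odflt 1 [pick g | s == family_perm fits b ^ g].

Lemma conj_fromP b w :
  family_perm fits b ^ w = family_perm fits b ^ conj_from b (family_perm fits b ^ w).
Proof. by rewrite /conj_from; case: pickP => [g /eqP //|H]; move: (H w); rewrite eqxx. Qed.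

(* Pairs in B(n) built from b and w: s = r_b^w and t = z (0 2)^g where
   s = r_b^g for the chosen g and z = g^-1 w centralizes s. *)
Definition family_pair (p : k.-tuple bool * 'S_n) : 'S_n * 'S_n :=
  let: (b, w) := p in
  let s := family_perm fits b ^ w in let g := conj_from b s in
  (s, (g^-1 * w) * (swap02 ^ g)).

(* Every such pair lies in B(n): t differs from (0 2)^g by an element
   centralizing s, so [s, t] = [r_b, (0 2)]^g is a 3-cycle. *)
Lemma family_pair_in p : family_pair p \in setB n.
Proof.
case: p => b w; rewrite inE /=.
set s := family_perm fits b ^ w; set g := conj_from b s.
have Es : s = family_perm fits b ^ g by rewrite /s /g -conj_fromP.
have Hz : s ^ (g^-1 * w) = s by rewrite {1}Es -conjgM mulKVg.
by rewrite paper_comm_centM // Es paper_commJ; apply/is_3cycleJ/family_comm_3cycle.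
Qed.

(* Distinct data (b, w) give distinct pairs: b is determined by the conjugacy
   class of s, then w is recovered from t. *)
Lemma family_pair_inj : injective family_pair.
Proof.
move=> [b w] [b' w'] /= [E1 E2].
have Eb : b = b'.
  apply: (@family_perm_conj _ _ fits _ _ (w * w'^-1)).
  by rewrite conjgM E1 -conjgM mulgV conjg1.
subst b'; rewrite E1 in E2.
by move/mulIg/mulgI: E2 => ->.
Qed.

Lemma card_setB_ge : 2 ^ k * n`! <= #|setB n|.
Proof.
have sub : family_pair @: [set: k.-tuple bool * 'S_n] \subset setB n.
  by apply/subsetP=> _ /imsetP[p _ ->]; exact: family_pair_in.
have := subset_leq_card sub; rewrite card_imset; last exact: family_pair_inj.
by rewrite cardsT card_prod card_tuple card_bool card_Sn.
Qed.

End LowerBound.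

Local Close Scope group_scope.

Lemma family_size_succ k : family_size k.+1 = family_size k + (4 + k).
Proof.
rewrite /family_size.
have -> : iota 0 k.+1 = iota 0 k ++ [:: k] by rewrite -addn1 iotaD.
by rewrite map_cat sumn_cat /= addn0 addnA.
Qed.

Lemma family_size_le k : 8 <= k -> family_size k <= k * k.
Proof.
elim: k => [//|k IH]; rewrite leq_eqVlt => /orP[/eqP <-|H]; first by [].
rewrite family_size_succ; have := IH H; lia.
Qed.

Lemma poly_lt_exp D k : 31 * (D * 31 ^ 30) <= k -> D * k.+1 ^ 30 < 2 ^ k.
Proof.
move=> Hk; set q := k %/ 31.
have hq : D * 31 ^ 30 <= q by rewrite leq_divRL // mulnC.
have hk : k.+1 <= 31 * q.+1.
  have := divn_eq k 31; have := ltn_pmod k (isT : 0 < 31); rewrite -/q; lia.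
have h1 : k.+1 ^ 30 <= 31 ^ 30 * q.+1 ^ 30 by rewrite -expnMn leq_exp2r.
have h2 : D * 31 ^ 30 * q.+1 ^ 30 < q.+1 ^ 31.
  by rewrite (expnS q.+1 30) ltn_mul2r expn_gt0 ltnS.
have h3 : q.+1 ^ 31 <= 2 ^ k.
  apply: (@leq_trans (2 ^ (q * 31))); first by rewrite expnM leq_exp2r // ltn_expl.
  by rewrite leq_pexp2l // leq_trunc_div.
apply: leq_ltn_trans (leq_mul (leqnn D) h1) _.
by rewrite mulnA; apply: leq_trans h2 h3.
Qed.

(* For every D, eventually D #A(n) < #B(n): with k = floor(sqrt n), the
   family of length k fits into S_n and 2^k exceeds D n^15. *)
Lemma setA_negligible D : exists N, forall n, N <= n -> #|setA n| * D < #|setB n|.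
Proof.
set K := 31 * (D * 31 ^ 30) + 8.
exists (K * K) => n Hn.
set k := Nat.sqrt n.
have [/ssrnat.leP hk1 /ssrnat.ltP hk2] := PeanoNat.Nat.sqrt_spec n (le_0_n n).
have hKk : K <= k.
  by rewrite leqNgt; apply/negP => H; move: (leq_trans hk2 (leq_trans (leq_mul H H) Hn));
    rewrite ltnn.
have fits : family_size k <= n.
  by apply: leq_trans hk1; apply: family_size_le; apply: leq_trans hKk; rewrite leq_addl.
have hpoly : n ^ 3 * (n.+1 * n.+1) ^ 6 <= k.+1 ^ 30.
  apply: (@leq_trans (n.+1 ^ 15)).
    rewrite mulnn -expnM (_ : 15 = 3 + 2 * 6) // expnD leq_mul2r.
    by rewrite leq_exp2r ?leqnSn ?orbT.
  by rewrite (expnM k.+1 2 15) leq_exp2r // expn2.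
have hexp := poly_lt_exp (leq_trans (leq_addr 8 _) hKk : 31 * (D * 31 ^ 30) <= k).
apply: leq_trans (card_setB_ge fits).
apply: leq_ltn_trans (leq_mul (card_setA_le n) (leqnn D)) _.
rewrite mulnAC ltn_pmul2r ?fact_gt0 // mulnC.
by apply: leq_ltn_trans hexp; rewrite leq_mul2l hpoly orbT.
Qed.

Import Order.TTheory GRing.Theory Num.Theory.
Local Open Scope ring_scope.

(* In an ordered field: if a d < b, 1 <= eps d and eps > 0, then
   a <= eps (a d) < eps b, so a / b < eps. *)
Lemma ratio_lt (R : realFieldType) (eps a b d : R) :
  0 < eps -> 1 <= eps * d -> 0 <= a -> 0 < b -> a * d < b -> a / b < eps.
Proof.
move=> eps0 hd a0 b0 hab; rewrite ltr_pdivrMr //.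
have h1 : 0 <= a * (eps * d - 1) by rewrite mulr_ge0 // subr_ge0.
have h2 : 0 < eps * (b - a * d) by rewrite mulr_gt0 // subr_gt0.
nra.
Qed.

Lemma mul_denq_ge1 (eps : rat) : 0 < eps -> 1 <= eps * (`|denq eps|%N)%:R.
Proof.
move=> he; have -> : (`|denq eps|%N%:R : rat) = (denq eps)%:~R.
  by rewrite -[in RHS](gez0_abs (ltW (denq_gt0 eps))).
by rewrite -numqE ler1z -gtz0_ge1 numq_gt0.
Qed.

(* #A(n) / #B(n) tends to 0: for eps > 0 take D the denominator of eps, so
   that eventually D #A(n) < #B(n). *)
Theorem mainTheorem20 :
  forall eps : rat, 0 < eps ->
  exists N : nat, forall n : nat, (N <= n)%N ->
    (#|setA n|%:R / #|setB n|%:R : rat) < eps.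
Proof.
move=> eps he; have [N HN] := setA_negligible `|denq eps|%N.
exists N => n Hn; have hAB := HN n Hn.
apply: ratio_lt he (mul_denq_ge1 he) _ _ _; rewrite ?ler0n //.
  by rewrite ltr0n; apply: leq_ltn_trans hAB.
by rewrite -natrM ltr_nat.
Qed.
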